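(* Let $\pi$ be a policy, $p$ a prior, and $f$ a utility function. For any integer $i$ with $1\le i\le c_{\mathrm{avg}}(\pi,p)$, define $\Delta_i:=f_{\mathrm{avg}}(\pi_i,p)-f_{\mathrm{avg}}(\pi_{i-1},p)$. Then $\Delta_i\ge\Delta^l_{\pi,i}$.
   Context: Finite ground set $V$, finite state set $Y$; a realization $\phi:V\to Y$ is drawn from prior $p$; $f:2^V\times\Phi_V\to\mathbb{R}$. A partial realization $\psi$ maps $\mathrm{dom}(\psi)\subseteq V$ to $Y$; $\phi\sim\psi$ means agreement on $\mathrm{dom}(\psi)$. A (possibly randomized) policy maps the observed partial realization to the next element to select or $\bot$ (terminate); $\psi_t$ denotes observations after $t$ selections; $E(\pi,\phi)$ is the set of selected elements; $f_{\mathrm{avg}}(\pi,p)=\mathbb{E}[f(E(\pi,\phi),\phi)]$, $c_{\mathrm{avg}}(\pi,p)=\mathbb{E}[|E(\pi,\phi)|]$. $\Delta^f_p(v\mid\psi)=\mathbb{E}[f(\{v\}\cup\mathrm{dom}(\psi),\phi)-f(\mathrm{dom}(\psi),\phi)\mid\phi\sim\psi]$. A sub-policy of $\pi$ runs like $\pi$ but may terminate earlier. For $\tau\ge0,\rho\in[0,1]$, $\pi^{\tau,\rho}$ is the sub-policy of $\pi$ that with probability $\rho$ terminates as soon as every remaining element has expected marginal gain strictly smaller than $\tau$, otherwise terminates as soon as every remaining element has expected marginal gain at most $\tau$. For each integer $i\le c_{\mathrm{avg}}(\pi,p)$ the sub-policy of this form with average cost $i$ exists and is unique; denote it $\pi_i$;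 $\pi_0$ terminates before selecting any element. $\Delta^l_{\pi,i}$ is the largest real $u$ such that almost surely, for all $t$ until $\pi_i$ terminates, $\Delta^f_p(\pi_i(\psi_t)\mid\psi_t)\ge u$. *)

From HB Require Import structures.
From mathcomp Require Import all_boot all_order all_algebra.
Set Implicit Arguments. Unset Strict Implicit. Unset Printing Implicit Defensive.
Import Order.TTheory GRing.Theory Num.Theory.
Local Open Scope ring_scope.

Section Adaptive.
Variables (R : realFieldType) (V Y : finType).

Definition realization := {ffun V -> Y}.
(* partial realizations: psi v = Some y iff v in dom psi and psi(v) = y *)
Definition prealization := {ffun V -> option Y}.

Definition pdom (psi : prealization) : {set V} := [set v | psi v != None].

Definition psi_empty : prealization := [ffun => None].

Definition consistent (phi : realization) (psi : prealization) : bool :=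
  [forall v, if psi v is Some y then phi v == y else true].

Definition extend (psi : prealization) (phi : realization) (v : V) : prealization :=
  [ffun w => if w == v then Some (phi v) else psi w].

Definition is_dist (T : finType) (d : {ffun T -> R}) : Prop :=
  (forall x, 0 <= d x) /\ \sum_x d x = 1.

Definition cond_gain (p : {ffun realization -> R})
    (f : {set V} -> realization -> R) (v : V) (psi : prealization) : R :=
  (\sum_(phi | consistent phi psi) p phi * (f (v |: pdom psi) phi - f (pdom psi) phi))
  / (\sum_(phi | consistent phi psi) p phi).

(* deterministic policy: observed partial realization -> next element or None (= bot) *)
Definition dpolicy := {ffun prealization -> option V}.

(* randomized policy: a probability distribution over deterministic policies *)
Definition rpolicy := {ffun dpolicy -> R}.

(* one step of running s on phi: select a new element and observe its state,
   or terminate (fixed point) *)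
Definition step (s : dpolicy) (phi : realization) (psi : prealization) : prealization :=
  match s psi with
  | Some v => if psi v == None then extend psi phi v else psi
  | None => psi
  end.

Definition obs_at (s : dpolicy) (phi : realization) (t : nat) : prealization :=
  iter t (step s phi) psi_empty.

(* final observations; at most #|V| selections happen *)
Definition final_obs (s : dpolicy) (phi : realization) : prealization :=
  obs_at s phi #|V|.

Definition selected (s : dpolicy) (phi : realization) : {set V} :=
  pdom (final_obs s phi).

Definition f_avg (mu : rpolicy) (p : {ffun realization -> R})
    (f : {set V} -> realization -> R) : R :=
  \sum_s \sum_phi mu s * p phi * f (selected s phi) phi.

Definition c_avg (mu : rpolicy) (p : {ffun realization -> R}) : R :=
  \sum_s \sum_phi mu s * p phi * (#|selected s phi|)%:R.

Definition trunc (p : {ffun realization -> R}) (f : {set V} -> realization -> R)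
    (tau : R) (strict : bool) (s : dpolicy) : dpolicy :=
  [ffun psi => if [forall v, (v \notin pdom psi) ==>
                     (if strict then cond_gain p f v psi < tau
                      else cond_gain p f v psi <= tau)]
               then None else s psi].

(* pi^{tau,rho}: with probability rho use the strict rule, otherwise the
   non-strict rule (coin independent of pi's own randomness and of phi) *)
Definition thr_policy (mu : rpolicy) (p : {ffun realization -> R})
    (f : {set V} -> realization -> R) (tau rho : R) : rpolicy :=
  [ffun s' => \sum_(s | trunc p f tau true s == s') rho * mu s
            + \sum_(s | trunc p f tau false s == s') (1 - rho) * mu s].

Definition as_gain_lb (mu : rpolicy) (p : {ffun realization -> R})
    (f : {set V} -> realization -> R) (u : R) : Prop :=
  forall (s : dpolicy) (phi : realization), 0 < mu s -> 0 < p phi ->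
  forall t : nat, (t < #|V|)%N ->
  forall v : V, s (obs_at s phi t) = Some v -> obs_at s phi t v = None ->
    u <= cond_gain p f v (obs_at s phi t).

End Adaptive.

From HB Require Import structures.
From mathcomp Require Import all_boot all_order all_algebra ring.
Set Implicit Arguments. Unset Strict Implicit. Unset Printing Implicit Defensive.
Import Order.TTheory GRing.Theory Num.Theory.
Local Open Scope ring_scope.

(* Fix an almost-sure lower bound [u] on the expected marginal gains of pi_i
   and measure a run by its net value f(E) - u |E|.  If [S] is a sub-policy of
   [L], the two runs agree until [S] stops; every later selection of [L] has
   conditional expected gain at least [u], so conditionally on the observations
   it does not decrease the expected net value.  Hence E[net value] is monotone
   along sub-policies.  The truncations mixed in pi_i and pi_{i-1} admit a
   coupling in which one side always extends the other.  If pi_{i-1} were the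
   longer one, the average cost of pi_i could not exceed that of pi_{i-1};
   so pi_i is the longer one, its average net value dominates, and since the
   average costs differ by exactly 1 this is Delta_i >= u. *)

Section Runs.
Variables V Y : finType.
Implicit Types (s S L : dpolicy V Y) (phi : realization V Y) (psi : prealization V Y).

Definition psub (a b : prealization V Y) : Prop :=
  forall v y, a v = Some y -> b v = Some y.

Definition subpolicy S L : Prop := forall psi, S psi != None -> L psi = S psi.

Lemma psub_trans (a b c : prealization V Y) : psub a b -> psub b c -> psub a c.
Proof. by move=> ab bc v y /ab /bc. Qed.

Lemma psub_step s phi psi : psub psi (step s phi psi).
Proof.
move=> w y psi_w; rewrite /step; case: (s psi) => [v|] //.
case: eqP => psi_v //; rewrite /extend ffunE; case: eqP => [wv|] //.
by move: psi_w; rewrite wv psi_v.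
Qed.

Lemma obs_atS s phi t : obs_at s phi t.+1 = step s phi (obs_at s phi t).
Proof. exact: iterS. Qed.

Lemma psub_obs_at s phi t t' : (t <= t')%N -> psub (obs_at s phi t) (obs_at s phi t').
Proof.
move=> /subnK <-; elim: (t' - t)%N => [|k IH] //.
by rewrite addSn obs_atS; apply: psub_trans IH _; apply: psub_step.
Qed.

Lemma consistent_psub phi (a b : prealization V Y) :
  psub a b -> consistent phi b -> consistent phi a.
Proof.
move=> ab /forallP phi_b; apply/forallP => v; case a_v: (a v) => [y|] //.
by move: (phi_b v); rewrite (ab _ _ a_v).
Qed.

Lemma consistent_obs_at s phi t : consistent phi (obs_at s phi t).
Proof.
elim: t => [|t IH]; first by apply/forallP => v; rewrite ffunE.
rewrite obs_atS /step; case: (s _) => [v|] //; case: eqP => // _.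
apply/forallP => w; rewrite /extend ffunE; case: eqP => [->|_] //.
by move/forallP: IH.
Qed.

Lemma obs_at_consistent s phi phi' t :
  consistent phi' (obs_at s phi t) -> obs_at s phi' t = obs_at s phi t.
Proof.
elim: t => [|t IH] // phi'_t1.
have phi'_t : consistent phi' (obs_at s phi t).
  by apply: consistent_psub phi'_t1; apply: psub_obs_at.
rewrite !obs_atS (IH phi'_t); move: phi'_t1; rewrite obs_atS /step.
case: (s _) => [v|] //; case: eqP => // _ /forallP /(_ v).
rewrite /extend ffunE eqxx => /eqP phi'_v.
by apply/ffunP => w; rewrite !ffunE phi'_v.
Qed.

Lemma obs_at_fiber s phi phi' t :
  (obs_at s phi' t == obs_at s phi t) = consistent phi' (obs_at s phi t).
Proof.
apply/eqP/idP => [<-|]; first exact: consistent_obs_at.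
exact: obs_at_consistent.
Qed.

Lemma pdom_psub (a b : prealization V Y) : psub a b -> pdom a \subset pdom b.
Proof.
move=> ab; apply/subsetP => v; rewrite !inE.
by case a_v: (a v) => [y|] //; rewrite (ab _ _ a_v).
Qed.

Lemma pdom_extend psi phi v : pdom (extend psi phi v) = v |: pdom psi.
Proof. by apply/setP => w; rewrite /extend !inE ffunE; case: (w == v). Qed.

Section SubPolicy.
Variables S L : dpolicy V Y.
Hypothesis SL : subpolicy S L.

Lemma subpolicy_obs_at phi t :
  S (obs_at S phi t) != None -> obs_at L phi t = obs_at S phi t.
Proof.
elim: t => [|t IH] //; rewrite !obs_atS.
case S_t: (S (obs_at S phi t)) => [v|]; last by rewrite /step S_t S_t.
by rewrite IH ?S_t // /step SL ?S_t.
Qed.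

Lemma psub_obs_at_subpolicy phi t : psub (obs_at S phi t) (obs_at L phi t).
Proof.
elim: t => [|t IH] //; rewrite !obs_atS.
case S_t: (S (obs_at S phi t)) => [v|].
  by rewrite subpolicy_obs_at ?S_t // /step SL ?S_t.
by rewrite {1}/step S_t; apply: psub_trans IH _; apply: psub_step.
Qed.

Lemma card_selected_subpolicy phi : (#|selected S phi| <= #|selected L phi|)%N.
Proof. exact/subset_leq_card/pdom_psub/psub_obs_at_subpolicy. Qed.

End SubPolicy.
End Runs.

Section NetValue.
Variables (R : realFieldType) (V Y : finType).
Variables (p : {ffun realization V Y -> R}) (f : {set V} -> realization V Y -> R) (u : R).
Hypothesis p_ge0 : forall phi, 0 <= p phi.
Implicit Types (s S L : dpolicy V Y) (phi : realization V Y) (psi : prealization V Y).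

Definition net psi phi : R := f (pdom psi) phi - u * #|pdom psi|%:R.

Definition net_value s : R := \sum_phi p phi * net (final_obs s phi) phi.

Definition exp_card s : R := \sum_phi p phi * #|selected s phi|%:R.

Lemma f_avg_net_value (mu : rpolicy R V Y) :
  f_avg mu p f - u * c_avg mu p = \sum_s mu s * net_value s.
Proof.
rewrite /f_avg /c_avg mulr_sumr -sumrB; apply: eq_bigr => s _.
rewrite mulr_sumr -sumrB /net_value mulr_sumr; apply: eq_bigr => phi _.
by rewrite /net /selected; ring.
Qed.

Lemma c_avg_exp_card (mu : rpolicy R V Y) : c_avg mu p = \sum_s mu s * exp_card s.
Proof.
apply: eq_bigr => s _; rewrite /exp_card mulr_sumr.
by apply: eq_bigr => phi _; rewrite mulrA.
Qed.

Lemma exp_card_subpolicy S L : subpolicy S L -> exp_card S <= exp_card L.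
Proof.
move=> SL; apply: ler_sum => phi _; apply: ler_wpM2l => //.
by rewrite ler_nat; apply: card_selected_subpolicy.
Qed.

Lemma consistent_net_step_ge0 L psi :
  (forall phi v, consistent phi psi -> 0 < p phi -> L psi = Some v -> psi v = None ->
     u <= cond_gain p f v psi) ->
  0 <= \sum_(phi | consistent phi psi) p phi * (net (step L phi psi) phi - net psi phi).
Proof.
move=> gain_lb; rewrite /step; case L_psi: (L psi) => [v|]; last first.
  by rewrite big1 // => ? _; rewrite subrr mulr0.
case: eqP => psi_v; last by rewrite big1 // => ? _; rewrite subrr mulr0.
have v_new : v \notin pdom psi by rewrite inE psi_v.
rewrite (eq_bigr (fun phi => p phi * (f (v |: pdom psi) phi - f (pdom psi) phi) - p phi * u));
  last by move=> phi _; rewrite /net pdom_extend cardsU1 v_new add1n -addn1 natrD; ring.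
rewrite sumrB -mulr_suml subr_ge0.
case: (boolP [exists phi, consistent phi psi && (0 < p phi)]) => [|/existsPn null].
  case/existsP=> phi1 /andP[phi1_psi p1_gt0].
  have mass_gt0 : 0 < \sum_(phi | consistent phi psi) p phi.
    by apply: lt_le_trans p1_gt0 _; rewrite (bigD1 phi1) //= lerDl sumr_ge0.
  have := gain_lb phi1 v phi1_psi p1_gt0 L_psi psi_v.
  by rewrite /cond_gain ler_pdivlMr // mulrC.
have p_null phi : consistent phi psi -> p phi = 0.
  move=> phi_psi; apply/eqP; rewrite eq_le p_ge0 andbT leNgt.
  by move: (null phi); rewrite phi_psi.
by rewrite !big1 ?mul0r // => phi /p_null ->; rewrite mul0r.
Qed.

Lemma exp_net_step_ge0 L t (c : realization V Y -> R) :
  (forall phi, 0 <= c phi) ->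
  (forall phi phi', consistent phi' (obs_at L phi t) -> c phi' = c phi) ->
  (forall phi v, 0 < p phi -> L (obs_at L phi t) = Some v -> obs_at L phi t v = None ->
     u <= cond_gain p f v (obs_at L phi t)) ->
  0 <= \sum_phi p phi * (c phi * (net (obs_at L phi t.+1) phi - net (obs_at L phi t) phi)).
Proof.
move=> c_ge0 c_fiber gain_lb.
(* Condition on [obs_at L phi t]: each nonempty fiber is the event [consistent phi psi]. *)
rewrite (partition_big (fun phi => obs_at L phi t) predT) //.
apply: sumr_ge0 => psi _.
case: (boolP [exists phi0, obs_at L phi0 t == psi]) => [|/existsPn none]; last first.
  by rewrite big1 // => phi /eqP phi_psi; move: (none phi); rewrite phi_psi eqxx.
case/existsP=> phi0 /eqP <-{psi}.
rewrite (eq_bigl (fun phi => consistent phi (obs_at L phi0 t))); last first.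
  by move=> phi /=; rewrite obs_at_fiber.
rewrite (eq_bigr (fun phi => c phi0 *
    (p phi * (net (step L phi (obs_at L phi0 t)) phi - net (obs_at L phi0 t) phi)))); last first.
  move=> phi phi_0; rewrite (c_fiber _ _ phi_0) obs_atS (obs_at_consistent phi_0).
  by rewrite mulrCA.
rewrite -mulr_sumr; apply: mulr_ge0 => //.
apply: consistent_net_step_ge0 => phi v phi_0 p_phi.
by rewrite -(obs_at_consistent phi_0); apply: gain_lb.
Qed.

Definition stopped S phi t : R := (S (obs_at S phi t) == None)%:R.

(* Until [S] stops it makes the same moves as [L]; afterwards only [L] moves. *)
Lemma net_increment_subpolicy S L phi t : subpolicy S L ->
  net (obs_at L phi t.+1) phi - net (obs_at L phi t) phi
    - (net (obs_at S phi t.+1) phi - net (obs_at S phi t) phi)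
  = stopped S phi t * (net (obs_at L phi t.+1) phi - net (obs_at L phi t) phi).
Proof.
move=> SL; rewrite /stopped; case S_t: (S (obs_at S phi t)) => [v|].
  by rewrite !obs_atS (subpolicy_obs_at SL) ?S_t // /step SL ?S_t // subrr mul0r.
by rewrite (obs_atS S) /step S_t eqxx subrr subr0 mul1r.
Qed.

Lemma net_value_subpolicy S L : subpolicy S L ->
  (forall phi t v, 0 < p phi -> (t < #|V|)%N -> L (obs_at L phi t) = Some v ->
     obs_at L phi t v = None -> u <= cond_gain p f v (obs_at L phi t)) ->
  net_value S <= net_value L.
Proof.
move=> SL gain_lb; rewrite -subr_ge0 /net_value -sumrB.
have telescope s phi : net (final_obs s phi) phi - net (psi_empty V Y) phi =
    \sum_(t < #|V|) (net (obs_at s phi t.+1) phi - net (obs_at s phi t) phi).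
  by rewrite -(telescope_sumr (fun t => net (obs_at s phi t) phi) (leq0n _)) big_mkord.
rewrite (eq_bigr (fun phi => \sum_(t < #|V|) p phi *
    (stopped S phi t * (net (obs_at L phi t.+1) phi - net (obs_at L phi t) phi)))); last first.
  move=> phi _; rewrite -mulrBr -mulr_sumr; congr (_ * _).
  have -> : net (final_obs L phi) phi - net (final_obs S phi) phi =
      (net (final_obs L phi) phi - net (psi_empty V Y) phi)
      - (net (final_obs S phi) phi - net (psi_empty V Y) phi) by ring.
  by rewrite !telescope -sumrB; apply: eq_bigr => t _; apply: net_increment_subpolicy.
rewrite exchange_big /=; apply: sumr_ge0 => t _; apply: exp_net_step_ge0.
- by move=> phi; rewrite /stopped ler0n.
- move=> phi phi' phi'_L.
  rewrite /stopped (obs_at_consistent (s := S) (phi := phi) (phi' := phi')) //.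
  by apply: (consistent_psub _ phi'_L); apply: psub_obs_at_subpolicy.
- by move=> phi v p_phi; apply: gain_lb.
Qed.

End NetValue.

Lemma sum_coupling (R : pzRingType) (I J : finType) (a : I -> R) (c : J -> R)
    (w : I -> J -> R) (x : I -> R) (y : J -> R) :
  (forall i, \sum_j w i j = a i) -> (forall j, \sum_i w i j = c j) ->
  \sum_i a i * x i - \sum_j c j * y j = \sum_i \sum_j w i j * (x i - y j).
Proof.
move=> w_row w_col.
rewrite [RHS](eq_bigr (fun i => \sum_j w i j * x i - \sum_j w i j * y j)); last first.
  by move=> i _; rewrite -sumrB; apply: eq_bigr => j _; rewrite mulrBr.
rewrite sumrB [X in _ = _ - X]exchange_big /=; congr (_ - _); apply: eq_bigr => k _.
  by rewrite -w_row mulr_suml.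
by rewrite -w_col mulr_suml.
Qed.

Section Threshold.
Variables (R : realFieldType) (V Y : finType).
Variables (mu : rpolicy R V Y) (p : {ffun realization V Y -> R}).
Variable f : {set V} -> realization V Y -> R.
Hypotheses (mu_dist : is_dist mu) (p_ge0 : forall phi, 0 <= p phi).
Implicit Types (s S L : dpolicy V Y) (tau rho : R) (b : bool).

Definition coin rho b : R := if b then rho else 1 - rho.

Definition trunc_longer tau b tau' b' : bool :=
  (tau < tau') || ((tau == tau') && (b || ~~ b')).

Lemma trunc_subpolicy s tau b tau' b' :
  trunc_longer tau b tau' b' -> subpolicy (trunc p f tau' b' s) (trunc p f tau b s).
Proof.
move=> longer psi; rewrite !ffunE.
have below x : (if b then x < tau else x <= tau) -> (if b' then x < tau' else x <= tau').
  case/orP: longer => [lt_tau | /andP[/eqP <- bb']].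
    case: b; case: b' => /= x_tau.
    - exact: lt_trans lt_tau.
    - exact/ltW/(lt_trans x_tau).
    - exact: le_lt_trans lt_tau.
    - exact/ltW/(le_lt_trans x_tau).
  by move: bb'; case: b; case: b' => //= _ /ltW.
case: ifP => [_|go' _]; first by rewrite eqxx.
case: ifP => // stop; move/negbT: go' => /negP[].
apply/forallP => v; apply/implyP => v_new; apply: below.
by move/forallP: stop => /(_ v); rewrite v_new.
Qed.

Lemma sum_thr_policy (G : dpolicy V Y -> R) tau rho :
  \sum_s thr_policy mu p f tau rho s * G s =
  \sum_s mu s * \sum_b coin rho b * G (trunc p f tau b s).
Proof.
have fiber b (c : R) : \sum_s' (\sum_(s | trunc p f tau b s == s') c * mu s) * G s' =
    \sum_s c * mu s * G (trunc p f tau b s).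
  rewrite [RHS](partition_big (trunc p f tau b) predT) //=.
  by apply: eq_bigr => s' _; rewrite mulr_suml; apply: eq_bigr => s /eqP ->.
under eq_bigr do rewrite ffunE mulrDl.
rewrite big_split /= !fiber -big_split /=.
by apply: eq_bigr => s _; rewrite big_bool /=; ring.
Qed.

Lemma thr_policy_ge tau rho b s : 0 <= rho <= 1 ->
  mu s * coin rho b <= thr_policy mu p f tau rho (trunc p f tau b s).
Proof.
case/andP=> rho_ge0 rho_le1; have [mu_ge0 _] := mu_dist.
have sum_ge0 b' (P : pred (dpolicy V Y)) : 0 <= \sum_(s' | P s') coin rho b' * mu s'.
  by apply: sumr_ge0 => s' _; rewrite mulr_ge0 // /coin; case: b'; rewrite ?subr_ge0.
rewrite ffunE mulrC; case: b.
  by rewrite (bigD1 s) //= -addrA lerDl addr_ge0 // (sum_ge0 true, sum_ge0 false).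
by rewrite [X in _ <= _ + X](bigD1 s) //= addrCA lerDl addr_ge0 // (sum_ge0 true, sum_ge0 false).
Qed.

Definition thr_longer tau rho tau' rho' : bool :=
  (tau < tau') || ((tau == tau') && (rho' <= rho)).

Lemma thr_longer_total tau rho tau' rho' :
  thr_longer tau rho tau' rho' || thr_longer tau' rho' tau rho.
Proof. by rewrite /thr_longer; case: ltgtP => //= _; apply: le_total. Qed.

Lemma thr_coupling tau rho tau' rho' :
  0 <= rho <= 1 -> 0 <= rho' <= 1 -> thr_longer tau rho tau' rho' ->
  exists w : bool -> bool -> R,
    [/\ forall b b', 0 <= w b b', forall b, \sum_b' w b b' = coin rho b,
        forall b', \sum_b w b b' = coin rho' b'
      & forall b b', w b b' != 0 -> trunc_longer tau b tau' b'].
Proof.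
move=> /andP[rho_ge0 rho_le1] /andP[rho'_ge0 rho'_le1] /orP[lt_tau | /andP[/eqP <- le_rho]].
  exists (fun b b' => coin rho b * coin rho' b'); split.
  - by case; case; rewrite mulr_ge0 ?subr_ge0.
  - by move=> b; rewrite -mulr_sumr big_bool /= addrC subrK mulr1.
  - by move=> b'; rewrite -mulr_suml big_bool /= addrC subrK mul1r.
  - by move=> b b' _; rewrite /trunc_longer lt_tau.
exists (fun b b' => if b == b' then (if b then rho' else 1 - rho)
                    else (if b then rho - rho' else 0)); split.
- by case; case; rewrite /= ?subr_ge0.
- by case; rewrite big_bool /=; ring.
- by case; rewrite big_bool /=; ring.
- by case; case; rewrite /trunc_longer ?eqxx ?orbT // eqxx.
Qed.

Lemma sum_thr_policy_mono (F : dpolicy V Y -> R) tau rho tau' rho' :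
  0 <= rho <= 1 -> 0 <= rho' <= 1 -> thr_longer tau rho tau' rho' ->
  (forall L S, 0 < thr_policy mu p f tau rho L -> subpolicy S L -> F S <= F L) ->
  \sum_s thr_policy mu p f tau' rho' s * F s <= \sum_s thr_policy mu p f tau rho s * F s.
Proof.
move=> rho01 rho'01 longer F_mono; have [mu_ge0 _] := mu_dist.
have [w [w_ge0 w_row w_col w_longer]] := thr_coupling rho01 rho'01 longer.
have w_le_coin b b' : w b b' <= coin rho b.
  by rewrite -w_row big_bool; case: b'; rewrite ?lerDl ?lerDr w_ge0.
rewrite !sum_thr_policy -subr_ge0 -sumrB; apply: sumr_ge0 => s _.
rewrite -mulrBr (sum_coupling (fun b => F (trunc p f tau b s))
                              (fun b' => F (trunc p f tau' b' s)) w_row w_col).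
have [-> | mu_s] := eqVneq (mu s) 0; first by rewrite mul0r.
rewrite mulr_ge0 //; apply: sumr_ge0 => b _; apply: sumr_ge0 => b' _.
have [-> | w_bb'] := eqVneq (w b b') 0; first by rewrite mul0r.
rewrite mulr_ge0 // subr_ge0; apply: F_mono; last exact/trunc_subpolicy/w_longer.
apply: lt_le_trans (thr_policy_ge tau b s rho01).
apply: mulr_gt0; first by rewrite lt_def mu_s mu_ge0.
by apply: lt_le_trans (w_le_coin b b'); rewrite lt_def w_bb' w_ge0.
Qed.

Lemma c_avg_thr_mono tau rho tau' rho' :
  0 <= rho <= 1 -> 0 <= rho' <= 1 -> thr_longer tau rho tau' rho' ->
  c_avg (thr_policy mu p f tau' rho') p <= c_avg (thr_policy mu p f tau rho) p.
Proof.
move=> rho01 rho'01 longer; rewrite !c_avg_exp_card.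
by apply: sum_thr_policy_mono => // L S _; apply: exp_card_subpolicy.
Qed.

Lemma f_avg_thr_mono u tau rho tau' rho' :
  0 <= rho <= 1 -> 0 <= rho' <= 1 -> thr_longer tau rho tau' rho' ->
  as_gain_lb (thr_policy mu p f tau rho) p f u ->
  u * (c_avg (thr_policy mu p f tau rho) p - c_avg (thr_policy mu p f tau' rho') p)
    <= f_avg (thr_policy mu p f tau rho) p f - f_avg (thr_policy mu p f tau' rho') p f.
Proof.
move=> rho01 rho'01 longer gain_lb; rewrite -subr_ge0.
set X := thr_policy mu p f tau rho; set X' := thr_policy mu p f tau' rho'.
have -> : f_avg X p f - f_avg X' p f - u * (c_avg X p - c_avg X' p) =
    (f_avg X p f - u * c_avg X p) - (f_avg X' p f - u * c_avg X' p) by ring.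
rewrite !f_avg_net_value subr_ge0; apply: sum_thr_policy_mono => // L S L_pos SL.
apply: net_value_subpolicy => // phi t v p_phi t_lt; exact: gain_lb.
Qed.

End Threshold.

Theorem lemma10 (R : realFieldType) (V Y : finType)
    (mu : rpolicy R V Y) (p : {ffun realization V Y -> R})
    (f : {set V} -> realization V Y -> R) (i : nat)
    (tau rho tau' rho' : R) :
  is_dist mu -> is_dist p ->
  (1 <= i)%N -> i%:R <= c_avg mu p ->
  (* pi_i = pi^{tau,rho} *)
  0 <= tau -> 0 <= rho <= 1 -> c_avg (thr_policy mu p f tau rho) p = i%:R ->
  (* pi_{i-1} = pi^{tau',rho'} *)
  0 <= tau' -> 0 <= rho' <= 1 -> c_avg (thr_policy mu p f tau' rho') p = (i.-1)%:R ->
  (* Delta_i >= Delta^l_{pi,i}, i.e. Delta_i >= every a.s. lower bound u *)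
  forall u : R, as_gain_lb (thr_policy mu p f tau rho) p f u ->
    u <= f_avg (thr_policy mu p f tau rho) p f - f_avg (thr_policy mu p f tau' rho') p f.
Proof.
move=> mu_dist [p_ge0 _] i_ge1 _ _ rho01 c_i _ rho'01 c_i' u gain_lb.
case/orP: (thr_longer_total tau rho tau' rho') => [longer | shorter].
  have c_step : c_avg (thr_policy mu p f tau rho) p - c_avg (thr_policy mu p f tau' rho') p = 1.
    by rewrite c_i c_i' -{1}(prednK i_ge1) mulrSr addrAC subrr add0r.
  by rewrite -[u]mulr1 -c_step; apply: f_avg_thr_mono.
have := c_avg_thr_mono f mu_dist p_ge0 rho'01 rho01 shorter.
by rewrite c_i c_i' ler_nat leqNgt ltn_predL i_ge1.
Qed.
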